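(* Let $q=2^f$ with $f\ge4$, let $q_0<q$ be a power of $2$, and assume $\gcd(q_0^2-1,q-1)=1$. Then: (i) $K'=Z(K)=\{1\}\cup\Omega_\infty$; (ii) $K'$ and $K/K'$ are elementary abelian $2$-groups of order $q$; (iii) for every $u\in\mathbb{F}_q$, the set $\Omega_u$ generates $K$; (iv) $H$ (acting by conjugation) acts transitively on the non-identity elements of $K'$ and transitively on the non-identity elements of $K/K'$ (hence irreducibly on $K'$ and on $K/K'$); (v) $H$ is a maximal subgroup of $HK'$, and $HK'$ is a maximal subgroup of $G$.
   Context: For $a,c\in\mathbb{F}_q$ and $\lambda\in\mathbb{F}_q^*$ let $\Phi_{a,c}=\begin{bmatrix}1&0&0\\ a&1&0\\ c&a^{q_0}&1\end{bmatrix}$ and $\Psi_\lambda=\mathrm{diag}(1,\lambda,\lambda^{q_0+1})$. Let $K=\{\Phi_{a,c}: a,c\in\mathbb{F}_q\}$, $H=\{\Psi_\lambda:\lambda\in\mathbb{F}_q^*\}$, $G=HK\le GL(3,\mathbb{F}_q)$; $K'$ is the commutator subgroup and $Z(K)$ the center of $K$. For $u\in\mathbb{F}_q$ let $\Omega_u=\{\Phi_{a,ua^{q_0+1}}: a\in\mathbb{F}_q^*\}$, and $\Omega_\infty=\{\Phi_{0,c}: c\in\mathbb{F}_q^*\}$. *)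

From HB Require Import structures.
From mathcomp Require Import all_boot all_order all_algebra all_fingroup all_solvable all_field.
Set Implicit Arguments. Unset Strict Implicit. Unset Printing Implicit Defensive.
Import GRing.Theory.
Local Open Scope ring_scope.

Section SuzukiLike.
Variables (F : finFieldType) (q0 : nat).

Definition Phi (a c : F) : 'M[F]_3 :=
  \matrix_(i < 3, j < 3)
    match nat_of_ord i, nat_of_ord j with
    | 0, 0 | 1, 1 | 2, 2 => 1
    | 1, 0 => a
    | 2, 0 => c
    | 2, 1 => a ^+ q0
    | _, _ => 0
    end.

Definition Psi (l : F) : 'M[F]_3 :=
  \matrix_(i < 3, j < 3)
    if i == j then
      match nat_of_ord i with
      | 0 => 1
      | 1 => l
      | _ => l ^+ q0.+1
      end
    else 0.

Local Open Scope group_scope.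

Definition Kset : {set {'GL_3[F]}} :=
  [set g : {'GL_3[F]} | [exists a : F, exists c : F, GLval g == Phi a c]].

Definition Hset : {set {'GL_3[F]}} :=
  [set g : {'GL_3[F]} | [exists l : F, (l != 0)%R && (GLval g == Psi l)]].

Definition Gset : {set {'GL_3[F]}} := Hset * Kset.

Definition Omega (u : F) : {set {'GL_3[F]}} :=
  [set g : {'GL_3[F]} |
     [exists a : F, (a != 0)%R && (GLval g == Phi a (u * a ^+ q0.+1)%R)]].

Definition Omega_inf : {set {'GL_3[F]}} :=
  [set g : {'GL_3[F]} | [exists c : F, (c != 0)%R && (GLval g == Phi 0 c)]].

End SuzukiLike.

(* Multiplying out, Phi_{a,c} Phi_{b,d} = Phi_{a+b, c+d+a^q0 b} (x |-> x^q0 is additive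
   since q0 is a power of the characteristic p) and Psi_l^-1 Phi_{a,c} Psi_l =
   Phi_{a/l, c/l^(q0+1)}.  Hence [Phi_{a,c}, Phi_{b,d}] = Phi_{0, a^q0 b - b^q0 a}.  Some b
   is moved by x |-> x^q0 (as 1 < q0 < q), and l |-> l^(q0+1) permutes the nonzero
   elements of F (as gcd(q0+1, q-1) = 1), so these commutators fill Kz = {Phi_{0,c}},
   which is also the centre: K' = Z(K) = Kz is isomorphic to (F,+), and so is K/K' via
   Phi_{a,c} |-> a.  The same surjectivity makes H transitive on the nonidentity elements
   of K' and of K/K'; an H-invariant subgroup of either is then trivial or everything,
   and by the Dedekind law this gives the maximality of H in HK' and of HK' in HK.
   Finally the commutators of elements of Omega_u fill K', and K' Omega_u = K. *)

From HB Require Import structures.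
From mathcomp Require Import all_boot all_order all_algebra all_fingroup all_solvable all_field.
From mathcomp Require Import ring.
Set Implicit Arguments. Unset Strict Implicit. Unset Printing Implicit Defensive.
Import GRing.Theory.

Section Irreducibility.
Local Open Scope group_scope.

Lemma stable_sub_atrans_setD1 (aT rT : finGroupType) (D : {group aT})
    (to : action D rT) (A : {group aT}) (G L : {group rT}) :
  A \subset D -> [transitive A, on G^# | to] -> L \subset G ->
  {in L & A, forall x a, to x a \in L} -> L :=: 1 \/ L :=: G.
Proof.
move=> sAD trA sLG stabL; have [-> | ntL] := eqVneq (L : {set rT}) 1; first by left.
right; apply/eqP; rewrite eqEsubset sLG; apply/subsetP => y Gy.
have [x Lx ntx] := trivgPn _ ntL.
have [-> | nty] := eqVneq y 1; first exact: group1.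
have G1x : x \in G^# by rewrite !inE ntx (subsetP sLG).
have : y \in orbit to A x by rewrite (atransPin sAD trA G1x) !inE nty.
by case/orbitP => a Aa <-; apply: stabL.
Qed.

Lemma maximal_mul_irr (gT : finGroupType) (A N : {group gT}) :
  A \subset 'N(N) -> ~~ (N \subset A) ->
  (forall L : {group gT}, L \subset N -> A \subset 'N(L) -> L :=: 1 \/ L :=: N) ->
  maximal A (A * N).
Proof.
move=> nNA not_sNA irrN; rewrite -(norm_joinEl nNA).
apply/maxgroupP; split=> [|M pMAN sAM].
  rewrite properEneq joing_subl andbT.
  by apply: contraNneq not_sNA => ->; apply: joing_subr.
have sMAN := proper_sub pMAN; rewrite norm_joinEl // in sMAN.
have nNMA : A \subset 'N(N :&: M) by rewrite normsI // (subset_trans sAM) ?normG.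
have [NM1 | NM_N] := irrN _ (subsetIl N M) nNMA.
  by rewrite -{1}(setIidPr sMAN) -group_modl // NM1 mulg1.
have sNM : N \subset M by rewrite -NM_N subsetIr.
by move: pMAN; rewrite properE join_subG sAM sNM andbF.
Qed.

Lemma maximal_mulQ_irr (gT : finGroupType) (A K N : {group gT}) :
  A \subset 'N(K) -> N <| K -> A \subset 'N(N) -> ~~ (K \subset A * N) ->
  (forall L : {group coset_of N},
     L \subset K / N -> A / N \subset 'N(L) -> L :=: 1 \/ L :=: K / N) ->
  maximal (A * N) (A * K).
Proof.
move=> nKA /andP[sNK nNK] nNA not_sKAN irrKN.
have nNAK : A <*> K \subset 'N(N) by rewrite join_subG nNA.
have nsN_AN : N <| A <*> N by rewrite /normal joing_subr join_subG nNA normG.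
have nsN_AK : N <| A <*> K by rewrite /normal (subset_trans sNK) ?joing_subr.
rewrite -(norm_joinEl nNA) -(norm_joinEl nKA) -(quotient_maximal nsN_AN nsN_AK).
rewrite /= !norm_joinEl // quotientMidr quotientMl //.
apply: (maximal_mul_irr (A := (A / N)%G) (N := (K / N)%G)) => //; first exact: quotient_norms.
by rewrite quotientSK // -(normC nNA).
Qed.

End Irreducibility.

Section FiniteFieldPowers.
Variable F : finFieldType.
Local Open Scope ring_scope.

Lemma exists_expf_neq n : (1 < n < #|F|)%N -> exists x : F, x ^+ n != x.
Proof.
case/andP=> n_gt1 n_ltF; apply/existsP; apply: contraLR n_ltF => /existsPn fixF.
have size_p : size ('X^n - 'X : {poly F}) = n.+1.
  by rewrite size_polyDl size_polyXn // size_polyN size_polyX.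
have p_neq0 : 'X^n - 'X != 0 :> {poly F} by rewrite -size_poly_eq0 size_p.
have rootsF : all (root ('X^n - 'X)) (enum F).
  by apply/allP => x _; rewrite rootE !hornerE subr_eq0; apply: negbNE.
by rewrite -leqNgt cardE -ltnS -size_p max_poly_roots ?enum_uniq.
Qed.

Lemma expf_pred_card (x : F) : x != 0 -> x ^+ #|F|.-1 = 1.
Proof.
move=> x_neq0; apply: (mulIf x_neq0).
by rewrite mul1r -exprSr prednK ?expf_card // ltnW ?finNzRing_gt1.
Qed.

Lemma expf_coprime_onto n (c : F) : coprime n #|F|.-1 -> c != 0 ->
  exists2 l : F, l != 0 & l ^+ n = c.
Proof.
move=> co_n c_neq0; have m_gt0 : (0 < #|F|.-1)%N by rewrite -subn1 subn_gt0 finNzRing_gt1.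
have [a _ /dvdnP[k def_k]] := Bezoutl n m_gt0; rewrite gcdnC (eqP co_n) in def_k.
exists (c^-1 ^+ a); first by rewrite expf_neq0 ?invr_eq0.
apply: (mulIf (invr_neq0 c_neq0)); rewrite divff // -exprM -exprSr.
by rewrite -addn1 addnC def_k exprM expf_pred_card // expf_neq0 ?invr_eq0.
Qed.

End FiniteFieldPowers.

Lemma GLval_inj n (R : finComUnitRingType) : injective (@GLval n R).
Proof. exact: val_inj. Qed.

Section DiagonalMatrices.
Variables (F : finFieldType) (q0 : nat).
Local Open Scope ring_scope.

Lemma PsiM (l m : F) : Psi q0 l *m Psi q0 m = Psi q0 (l * m).
Proof.
apply/matrixP => i j; rewrite !mxE !big_ord_recr !big_ord0 /= !mxE.
by case: i => [[|[|[|i]]] Hi] //=; case: j => [[|[|[|j]]] Hj] //=; rewrite ?exprMn; ring.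
Qed.

Lemma Psi1 : Psi q0 1 = 1%:M :> 'M[F]_3.
Proof.
apply/matrixP => i j; rewrite !mxE.
by case: i => [[|[|[|i]]] Hi] //=; case: j => [[|[|[|j]]] Hj] //=; rewrite expr1n.
Qed.

Lemma Psi_unit (l : F) : l != 0 -> Psi q0 l \in unitmx.
Proof.
move=> l_neq0; have PsiV : Psi q0 l *m Psi q0 l^-1 = 1%:M by rewrite PsiM divff ?Psi1.
exact: (mulmx1_unit PsiV).1.
Qed.

Lemma Psi_Phi (l a c : F) : l != 0 ->
  Psi q0 l *m Phi q0 (a / l) (c / l ^+ q0.+1) = Phi q0 a c *m Psi q0 l.
Proof.
move=> l_neq0; apply/matrixP => i j; rewrite !mxE !big_ord_recr !big_ord0 /= !mxE.
case: i => [[|[|[|i]]] Hi] //=; case: j => [[|[|[|j]]] Hj] //=;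
  rewrite ?mulr0 ?mul0r ?addr0 ?add0r ?mulr1 ?mul1r //.
all: rewrite ?expr_div_n ?exprS; field; rewrite ?expf_neq0 //.
Qed.

End DiagonalMatrices.

Section CharacteristicP.
Variables (F : finFieldType) (p e : nat).
Local Open Scope ring_scope.
Hypothesis charFp : p \in [pchar F].
Local Notation q0 := (p ^ e)%N.

Lemma q0_gt0 : (0 < q0)%N.
Proof. by rewrite expn_gt0 prime_gt0 ?(pcharf_prime charFp). Qed.

Lemma exprD_q0 (x y : F) : (x + y) ^+ q0 = x ^+ q0 + y ^+ q0.
Proof. by apply: exprDn_pchar; rewrite pnatX pnatE ?charFp ?(pcharf_prime charFp). Qed.

Lemma PhiM (a c b d : F) : Phi q0 a c *m Phi q0 b d = Phi q0 (a + b) (c + d + a ^+ q0 * b).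
Proof.
apply/matrixP => i j; rewrite !mxE !big_ord_recr !big_ord0 /= !mxE.
by case: i => [[|[|[|i]]] Hi] //=; case: j => [[|[|[|j]]] Hj] //=; rewrite ?exprD_q0; ring.
Qed.

Lemma Phi0 : Phi q0 0 0 = 1%:M :> 'M[F]_3.
Proof.
apply/matrixP => i j; rewrite !mxE expr0n eqn0Ngt q0_gt0.
by case: i => [[|[|[|i]]] Hi] //=; case: j => [[|[|[|j]]] Hj].
Qed.

Lemma Phi_unit (a c : F) : Phi q0 a c \in unitmx.
Proof.
have PhiV : Phi q0 a c *m Phi q0 (- a) (a ^+ q0 * a - c) = 1%:M.
  by rewrite PhiM subrr mulrN (addrC c) subrK subrr Phi0.
exact: (mulmx1_unit PhiV).1.
Qed.

Local Open Scope group_scope.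

Definition gPhi (a c : F) : {'GL_3[F]} := insubd (1 : {'GL_3[F]}) (Phi q0 a c).
(* Psi 0 is singular, so gPsi 0 is the junk value 1. *)
Definition gPsi (l : F) : {'GL_3[F]} := insubd (1 : {'GL_3[F]}) (Psi q0 l).

Lemma val_gPhi a c : GLval (gPhi a c) = Phi q0 a c.
Proof. exact/insubdK/Phi_unit. Qed.

Lemma val_gPsi l : (l != 0)%R -> GLval (gPsi l) = Psi q0 l.
Proof. by move=> l_neq0; apply/insubdK/Psi_unit. Qed.

Lemma gPhiM a c b d : gPhi a c * gPhi b d = gPhi (a + b)%R (c + d + a ^+ q0 * b)%R.
Proof. by apply: GLval_inj; rewrite GL_ME !val_gPhi -mulmxE PhiM. Qed.

Lemma gPhi0 : gPhi 0%R 0%R = 1.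
Proof. by apply: GLval_inj; rewrite val_gPhi Phi0. Qed.

Lemma gPhi_inj a c b d : gPhi a c = gPhi b d -> a = b /\ c = d.
Proof.
move/(congr1 GLval); rewrite !val_gPhi => /matrixP eqPhi.
by move: (eqPhi (inord 1) (inord 0)) (eqPhi (inord 2) (inord 0)); rewrite !mxE !inordK.
Qed.

Lemma gPsiM l m : (l != 0)%R -> (m != 0)%R -> gPsi l * gPsi m = gPsi (l * m)%R.
Proof.
move=> l_neq0 m_neq0; apply: GLval_inj.
by rewrite GL_ME !val_gPsi ?mulf_neq0 // -mulmxE PsiM.
Qed.

Lemma gPsi1 : gPsi 1%R = 1.
Proof. by apply: GLval_inj; rewrite val_gPsi ?oner_eq0 // Psi1. Qed.

Lemma conjg_gPhi l a c : (l != 0)%R ->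
  gPhi a c ^ gPsi l = gPhi (a / l)%R (c / l ^+ q0.+1)%R.
Proof.
move=> l_neq0; rewrite conjgE; apply: (mulgI (gPsi l)); rewrite mulKVg.
by apply: GLval_inj; rewrite !GL_ME val_gPsi // !val_gPhi -!mulmxE Psi_Phi.
Qed.

Local Notation K := (Kset F q0).
Local Notation H := (Hset F q0).

Lemma memK g : reflect (exists a c, g = gPhi a c) (g \in K).
Proof.
rewrite inE; apply: (iffP existsP) => [[a /existsP[c /eqP Kg]] | [a [c ->]]].
  by exists a, c; apply: GLval_inj; rewrite val_gPhi.
by exists a; apply/existsP; exists c; rewrite val_gPhi.
Qed.

Lemma gPhi_K a c : gPhi a c \in K.
Proof. by apply/memK; exists a, c. Qed.

Lemma memH g : reflect (exists2 l, (l != 0)%R & g = gPsi l) (g \in H).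
Proof.
rewrite inE; apply: (iffP existsP) => [[l /andP[l_neq0 /eqP Hg]] | [l l_neq0 ->]].
  by exists l => //; apply: GLval_inj; rewrite val_gPsi.
by exists l; rewrite l_neq0 val_gPsi ?eqxx.
Qed.

Lemma gPsi_H l : (l != 0)%R -> gPsi l \in H.
Proof. by move=> l_neq0; apply/memH; exists l. Qed.

Lemma memOmega u g :
  reflect (exists2 a, (a != 0)%R & g = gPhi a (u * a ^+ q0.+1)%R) (g \in Omega q0 u).
Proof.
rewrite inE; apply: (iffP existsP) => [[a /andP[a_neq0 /eqP Og]] | [a a_neq0 ->]].
  by exists a => //; apply: GLval_inj; rewrite val_gPhi.
by exists a; rewrite a_neq0 val_gPhi eqxx.
Qed.

Lemma Kset_group_set : group_set K.
Proof.
apply/group_setP; split; first by rewrite -gPhi0 gPhi_K.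
by move=> _ _ /memK[a [c ->]] /memK[b [d ->]]; rewrite gPhiM gPhi_K.
Qed.
Canonical Kset_group := Group Kset_group_set.

Lemma Hset_group_set : group_set H.
Proof.
apply/group_setP; split; first by rewrite -gPsi1 gPsi_H ?oner_eq0.
move=> _ _ /memH[l l_neq0 ->] /memH[m m_neq0 ->].
by rewrite gPsiM ?gPsi_H ?mulf_neq0.
Qed.
Canonical Hset_group := Group Hset_group_set.

Definition Kz := [set gPhi 0%R c | c : F].

Lemma gPhi_Kz c : gPhi 0%R c \in Kz.
Proof. exact: imset_f. Qed.

Lemma gPhi0_eq1 c : (gPhi 0%R c == 1) = (c == 0%R).
Proof. by apply/eqP/eqP => [|->]; rewrite ?gPhi0 // -gPhi0 => /gPhi_inj[]. Qed.

Lemma Kz_group_set : group_set Kz.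
Proof.
apply/group_setP; split; first by rewrite -gPhi0 gPhi_Kz.
move=> _ _ /imsetP[c _ ->] /imsetP[d _ ->].
by rewrite gPhiM expr0n eqn0Ngt q0_gt0 mul0r addr0 gPhi_Kz.
Qed.
Canonical Kz_group := Group Kz_group_set.

Lemma KzE : Kz = [set 1] :|: Omega_inf F q0.
Proof.
apply/setP => g; rewrite !inE; apply/imsetP/orP => [[c _ ->] | [/eqP-> | ]].
- have [-> | c_neq0] := eqVneq c 0%R; first by rewrite gPhi0 eqxx; left.
  by right; apply/existsP; exists c; rewrite c_neq0 val_gPhi eqxx.
- by exists 0%R; rewrite ?gPhi0.
move=> /existsP[c /andP[_ /eqP Kg]].
by exists c => //; apply: GLval_inj; rewrite val_gPhi.
Qed.

Lemma card_Kz : #|Kz| = #|F|.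
Proof. by rewrite card_imset ?card_ord // => c d /gPhi_inj[]. Qed.

Lemma card_K : #|K| = (#|F| * #|F|)%N.
Proof.
have -> : K = [set gPhi x.1 x.2 | x : F * F].
  apply/setP => g; apply/memK/imsetP => [[a [c ->]] | [[a c] _ ->]]; last by exists a, c.
  by exists (a, c).
by rewrite card_imset ?card_prod // => [[a c] [b d]] /gPhi_inj[/= -> ->].
Qed.

Lemma commg_gPhi a c b d :
  [~ gPhi a c, gPhi b d] = gPhi 0%R (a ^+ q0 * b - b ^+ q0 * a)%R.
Proof.
apply: (mulgI (gPhi b d * gPhi a c)); rewrite -commgC !gPhiM.
by congr gPhi; ring.
Qed.

Lemma Kz_sub_center : Kz \subset 'Z(K).
Proof.
apply/subsetP => _ /imsetP[c _ ->]; apply/centerP; split=> [|_ /memK[a [d ->]]].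
  exact: gPhi_K.
by apply/commgP; rewrite commg_gPhi expr0n eqn0Ngt q0_gt0 !mul0r mulr0 subrr gPhi0.
Qed.

Lemma Kz_sub_K : Kz \subset K.
Proof. exact: subset_trans Kz_sub_center (center_sub K). Qed.

Lemma gPhi0X c n : gPhi 0%R c ^+ n = gPhi 0%R (c *+ n)%R.
Proof.
elim: n => [|n IHn]; first by rewrite mulr0n gPhi0.
by rewrite expgSr IHn gPhiM expr0n eqn0Ngt q0_gt0 mulr0 !addr0 mulrSr.
Qed.

Lemma abelem_Kz : p.-abelem Kz.
Proof.
apply/abelemP; first exact: pcharf_prime charFp.
split=> [|_ /imsetP[c _ ->]]; last by rewrite gPhi0X mulrn_pchar ?gPhi0.
exact: abelianS Kz_sub_center (center_abelian _).
Qed.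

Lemma H_norm_K : H \subset 'N(K).
Proof.
apply/subsetP => _ /memH[l l_neq0 ->]; rewrite inE; apply/subsetP.
by move=> _ /imsetP[_ /memK[a [c ->]] ->]; rewrite conjg_gPhi ?gPhi_K.
Qed.

Lemma trivg_HK : H :&: K = 1.
Proof.
apply/trivgP/subsetP => _ /setIP[/memH[l l_neq0 ->] /memK[a [c]]].
move/(congr1 GLval); rewrite val_gPsi // val_gPhi => /matrixP/(_ (inord 1) (inord 1)).
by rewrite !mxE !inordK //= eqxx => ->; rewrite gPsi1 set11.
Qed.

Section CoprimeExponent.
Hypotheses (e_gt0 : (0 < e)%N) (q0_ltF : (q0 < #|F|)%N).
Hypothesis coprime_q0S : coprime q0.+1 #|F|.-1.

Lemma exists_nonfixed : exists b : F, (b - b ^+ q0 != 0)%R.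
Proof.
have p_gt1 := prime_gt1 (pcharf_prime charFp).
have [b nfix_b] : exists b : F, (b ^+ q0 != b)%R.
  by apply: exists_expf_neq; rewrite q0_ltF andbT -{1}(expn0 p) ltn_exp2l.
by exists b; rewrite subr_eq0 eq_sym.
Qed.

Lemma center_K : 'Z(K) = Kz.
Proof.
apply/eqP; rewrite eqEsubset Kz_sub_center andbT.
apply/subsetP => _ /centerP[/memK[a [c ->]] cKx].
have comm_a b : (a ^+ q0 * b - b ^+ q0 * a = 0)%R.
  have /commgP := cKx _ (gPhi_K b 0%R).
  by rewrite commg_gPhi -gPhi0 => /eqP/gPhi_inj[].
have fix_a : (a ^+ q0 = a)%R.
  by apply/eqP; rewrite -subr_eq0 -(comm_a 1%R) expr1n mulr1 mul1r.
have [b nfix_b] := exists_nonfixed.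
have : (a * (b - b ^+ q0) = 0)%R by rewrite -(comm_a b) fix_a; ring.
by move/eqP; rewrite mulf_eq0 (negbTE nfix_b) orbF => /eqP->; apply: gPhi_Kz.
Qed.

(* At (a, b) = (l, l b) the commutator parameter is l^(q0+1) (b - b^q0), and
   l |-> l^(q0+1) maps onto the nonzero elements of F. *)
Lemma commg_gPhi_onto c : (c != 0)%R -> exists a b,
  [/\ (a != 0)%R, (b != 0)%R & forall x y, [~ gPhi a x, gPhi b y] = gPhi 0%R c].
Proof.
move=> c_neq0; have [b nfix_b] := exists_nonfixed.
have b_neq0 : (b != 0)%R.
  by apply: contraNneq nfix_b => ->; rewrite expr0n eqn0Ngt q0_gt0 subrr.
have cb_neq0 : (c / (b - b ^+ q0) != 0)%R by rewrite mulf_neq0 ?invr_eq0.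
have [l l_neq0 def_l] := expf_coprime_onto coprime_q0S cb_neq0.
exists l, (l * b)%R; split=> [||x y]; rewrite ?mulf_neq0 // commg_gPhi; congr gPhi.
by rewrite -[c](divfK nfix_b) -def_l exprS exprMn; ring.
Qed.

Lemma der_K : [~: K, K] = Kz.
Proof.
apply/eqP; rewrite eqEsubset gen_subG; apply/andP; split.
  apply/subsetP => _ /imset2P[_ _ /memK[a [c ->]] /memK[b [d ->]] ->].
  by rewrite commg_gPhi gPhi_Kz.
apply/subsetP => _ /imsetP[c _ ->]; have [-> | c_neq0] := eqVneq c 0%R.
  by rewrite gPhi0 group1.
have [a [b [_ _ comm_ab]]] := commg_gPhi_onto c_neq0.
by rewrite -(comm_ab 0%R 0%R) mem_commg ?gPhi_K.
Qed.

Lemma gen_Omega u : <<Omega q0 u>> = K.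
Proof.
have OmegaP a : (a != 0)%R -> gPhi a (u * a ^+ q0.+1)%R \in <<Omega q0 u>>.
  by move=> a_neq0; apply/mem_gen/memOmega; exists a.
have sKz : Kz \subset <<Omega q0 u>>.
  apply/subsetP => _ /imsetP[c _ ->]; have [-> | c_neq0] := eqVneq c 0%R.
    by rewrite gPhi0 group1.
  have [a [b [a_neq0 b_neq0 comm_ab]]] := commg_gPhi_onto c_neq0.
  by rewrite -(comm_ab (u * a ^+ q0.+1)%R (u * b ^+ q0.+1)%R) groupR ?OmegaP.
apply/eqP; rewrite eqEsubset gen_subG; apply/andP; split.
  by apply/subsetP => _ /memOmega[a _ ->]; apply: gPhi_K.
apply/subsetP => _ /memK[a [c ->]]; have [-> | a_neq0] := eqVneq a 0%R.
  exact: (subsetP sKz) (gPhi_Kz c).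
have -> : gPhi a c = gPhi a (u * a ^+ q0.+1)%R * gPhi 0%R (c - u * a ^+ q0.+1)%R.
  by rewrite gPhiM mulr0 !addr0 addrC subrK.
by rewrite groupM ?OmegaP ?(subsetP sKz) ?gPhi_Kz.
Qed.

Lemma atrans_Kz : [transitive H, on Kz^# | 'J].
Proof.
have Kz1 : gPhi 0%R 1%R \in Kz^# by rewrite !inE gPhi_Kz gPhi0_eq1 oner_eq0.
apply/imsetP; exists (gPhi 0%R 1%R) => //; apply/setP => x; apply/idP/idP.
  case/setD1P => ntx /imsetP[c _ def_x]; apply/orbitP.
  have c_neq0 : (c != 0)%R by rewrite -gPhi0_eq1 -def_x.
  have [l l_neq0 def_l] := expf_coprime_onto coprime_q0S (invr_neq0 c_neq0).
  by exists (gPsi l); rewrite ?gPsi_H //= conjg_gPhi // mul0r def_l invrK mul1r def_x.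
case/orbitP => _ /memH[l l_neq0 ->] <- /=.
rewrite conjg_gPhi // mul0r !inE gPhi_Kz gPhi0_eq1 mul1r invr_eq0.
by rewrite expf_eq0 (negbTE l_neq0) andbF.
Qed.

Local Notation K' := [~: K, K].

Lemma K_norm_der : K \subset 'N(K').
Proof. exact: normsR. Qed.

Lemma H_norm_der : H \subset 'N(K').
Proof. exact: normsR H_norm_K H_norm_K. Qed.

Lemma coset_gPhi a c : coset K' (gPhi a c) = coset K' (gPhi a 0%R).
Proof.
have -> : gPhi a c = gPhi a 0%R * gPhi 0%R c by rewrite gPhiM mulr0 !addr0 add0r.
rewrite morphM ?(subsetP K_norm_der) ?gPhi_K //= (coset_id (x := gPhi 0%R c)) ?mulg1 //.
by rewrite der_K gPhi_Kz.
Qed.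

Lemma coset_gPhi_eq1 a c : (coset K' (gPhi a c) == 1) = (a == 0%R).
Proof.
apply/idP/eqP => [/eqP/coset_idr | ->]; last by apply/eqP/coset_id; rewrite der_K gPhi_Kz.
move/(_ (subsetP K_norm_der _ (gPhi_K a c))).
by rewrite /= der_K => /imsetP[c' _ /gPhi_inj[]].
Qed.

Lemma coset_gPhiX a n : coset K' (gPhi a 0%R) ^+ n = coset K' (gPhi (a *+ n) 0%R).
Proof.
elim: n => [|n IHn]; first by rewrite mulr0n gPhi0 morph1.
rewrite expgSr IHn -morphM ?(subsetP K_norm_der) ?gPhi_K //= gPhiM.
by rewrite coset_gPhi mulrSr.
Qed.

Lemma abelem_quo_der : p.-abelem (K / K').
Proof.
apply/abelemP; first exact: pcharf_prime charFp.
split=> [|_ /morphimP[_ _ /memK[a [c ->]] ->]]; first exact: sub_der1_abelian.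
by rewrite /= coset_gPhi coset_gPhiX mulrn_pchar // gPhi0 morph1.
Qed.

Lemma card_quo_der : #|K / K'| = #|F|.
Proof.
rewrite card_quotient ?K_norm_der // -divgS /= der_K ?Kz_sub_K // card_K card_Kz.
by rewrite mulnK // ltnW ?finNzRing_gt1.
Qed.

Lemma qact_gPhi a c l : (l != 0)%R ->
  ('J / K')%act (coset K' (gPhi a c)) (gPsi l) = coset K' (gPhi (a / l)%R 0%R).
Proof.
move=> l_neq0; have Ngl := subsetP H_norm_der _ (gPsi_H l_neq0).
rewrite qactJ Ngl -morphJ // ?(subsetP K_norm_der) ?gPhi_K //=.
by rewrite conjg_gPhi // coset_gPhi.
Qed.

Lemma atrans_quo_der : [transitive H, on (K / K')^# | ('J / [~: K, K]%G)%act].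
Proof.
have KK'1 : coset K' (gPhi 1%R 0%R) \in (K / K')^#.
  by rewrite !inE coset_gPhi_eq1 oner_eq0 mem_quotient ?gPhi_K.
apply/imsetP; exists (coset K' (gPhi 1%R 0%R)) => //; apply/setP => x; apply/idP/idP.
  case/setD1P => ntx /morphimP[_ _ /memK[a [c ->]] def_x]; apply/orbitP.
  have a_neq0 : (a != 0)%R by rewrite -(coset_gPhi_eq1 a c) -def_x.
  exists (gPsi a^-1%R); first by rewrite gPsi_H ?invr_eq0.
  by rewrite qact_gPhi ?invr_eq0 // invrK mul1r def_x /= coset_gPhi.
case/orbitP => _ /memH[l l_neq0 ->] <-.
by rewrite qact_gPhi // !inE coset_gPhi_eq1 mul1r invr_eq0 l_neq0 mem_quotient ?gPhi_K.
Qed.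

Lemma H_invariant_der (L : {group {'GL_3[F]}}) :
  L \subset K' -> H \subset 'N(L) -> L :=: 1 \/ L :=: K'.
Proof.
rewrite der_K => sLKz nLH.
apply: stable_sub_atrans_setD1 (subsetT H) atrans_Kz sLKz _.
by move=> x h Lx Hh; rewrite /= memJ_norm ?(subsetP nLH).
Qed.

Lemma H_invariant_quo_der (L : {group coset_of K'}) :
  L \subset K / K' -> H / K' \subset 'N(L) -> L :=: 1 \/ L :=: K / K'.
Proof.
move=> sLKK' nLH; have sHN : H \subset qact_dom 'J K' by rewrite dom_qactJ H_norm_der.
apply: stable_sub_atrans_setD1 sHN atrans_quo_der sLKK' _.
move=> x h Lx Hh; rewrite /= qactJ (subsetP H_norm_der) //.
by rewrite memJ_norm ?(subsetP nLH) ?mem_quotient.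
Qed.

Lemma maximal_H_HK' : maximal H (H * K').
Proof.
apply: maximal_mul_irr H_norm_der _ H_invariant_der; apply/negP => /= sK'H.
have : gPhi 0%R 1%R \in H :&: K by rewrite inE (subsetP sK'H) ?gPhi_K ?der_K ?gPhi_Kz.
by rewrite trivg_HK inE gPhi0_eq1 oner_eq0.
Qed.

Lemma maximal_HK'_HK : maximal (H * K') (H * K).
Proof.
apply: maximal_mulQ_irr H_norm_K (der_normal 1 K) H_norm_der _ H_invariant_quo_der.
apply/negP; rewrite /= derg1 der_K => sKHKz.
have defK : K :=: Kz.
  by rewrite -[LHS](setIidPl sKHKz) -group_modr ?Kz_sub_K // setIC trivg_HK mul1g.
have /eqP := card_K; rewrite defK card_Kz -{1}(muln1 #|F|).
by rewrite eqn_pmul2l ?(ltnW (finNzRing_gt1 F)) // eq_sym gtn_eqF ?finNzRing_gt1.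
Qed.

End CoprimeExponent.

End CharacteristicP.

Local Open Scope group_scope.

Theorem lemma4p2 (F : finFieldType) (f e : nat)
  (hq : #|F| = (2 ^ f)%N) (hf : (4 <= f)%N) (he : (2 ^ e < 2 ^ f)%N)
  (hgcd : coprime ((2 ^ e) ^ 2 - 1) (2 ^ f - 1)) :
  let q0 := (2 ^ e)%N in
  let K := Kset F q0 in
  let H := Hset F q0 in
  let G := Gset F q0 in
  let K' := [~: K, K] in
  (* (i) *)
  [/\ K' = 'Z(K) /\ 'Z(K) = [set 1] :|: Omega_inf F q0,
  (* (ii) *)
      (2.-abelem K' /\ #|K'| = (2 ^ f)%N) /\
      (2.-abelem (K / K') /\ #|K / K'| = (2 ^ f)%N),
  (* (iii) *)
      (forall u : F, <<Omega q0 u>> = K),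
  (* (iv) *)
      [transitive H, on K'^# | 'J] /\
      [transitive H, on (K / K')^# | ('J / [~: K, K]%G)%act] /\
      (* hence irreducibly: no proper nontrivial H-invariant subgroups *)
      (forall L : {group {'GL_3[F]}}, L \subset K' -> H \subset 'N(L) ->
         L = 1 :> {set _} \/ L = K' :> {set _}) /\
      (forall L : {group coset_of [~: K, K]}, L \subset K / K' ->
         H / K' \subset 'N(L) -> L = 1 :> {set _} \/ L = K / K' :> {set _})
  & (* (v) *)
      maximal H (H * K') /\ maximal (H * K') G].
Proof.
have charF2 : 2 \in [pchar F]%R by apply: card_finPcharP hq _.
have e_gt0 : (0 < e)%N.
  rewrite lt0n; apply: contraTneq hgcd => ->; rewrite expn0 exp1n subnn /coprime gcd0n.
  by rewrite gtn_eqF // ltn_subRL (@leq_trans (2 ^ 4)) ?leq_exp2l.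
have q0_ltF : (2 ^ e < #|F|)%N by rewrite hq.
have coprime_q0S : coprime (2 ^ e).+1 #|F|.-1.
  rewrite hq -subn1; apply: coprime_dvdl hgcd.
  by rewrite -[in X in _ %| X](exp1n 2) subn_sqr addn1 dvdn_mull.
have derK := der_K charF2 e_gt0 q0_ltF coprime_q0S.
move=> q0 K H G K'; rewrite {}/K' {}/G {}/H {}/K {}/q0 /Gset.
split.
- by rewrite derK center_K ?KzE.
- by rewrite abelem_quo_der // card_quo_der // derK abelem_Kz // card_Kz.
- exact: gen_Omega.
- rewrite {1}derK; do !split; first exact: atrans_Kz.
  + exact: atrans_quo_der.
  + exact: H_invariant_der.
  + exact: H_invariant_quo_der.
- split; [exact: maximal_H_HK' | exact: maximal_HK'_HK].
Qed.
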